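(* Let $(\mathcal W,\rhd)$ be a well-founded frame. If $A\cong B$, then $\mathcal I[A]^\eta_p=\mathcal I[B]^\eta_p$ for every hereditary type environment $\eta$ and every $p\in\mathcal W$.
   Context: Type expressions: fix a countably infinite set of type variables $X,Y,Z,\dots$. Pseudo type expressions are generated by $A::=X\mid A\to A\mid \bullet A\mid \mu X.A$ ($\mu$ binds $X$; $\alpha$-convertible expressions are identified; $\to$ associates to the right; $\bullet$ binds tighter than $\to$, which binds tighter than $\mu$). $A[B/X]$ denotes capture-avoiding substitution. $\top$ abbreviates $\mu X.\bullet X$, and $\bullet^n A$ denotes $A$ prefixed by $n$ copies of $\bullet$. The tail $t(A)$ is defined by $t(X)=X$, $t(A\to B)=t(B)$, $t(\bullet A)=\bullet t(A)$, $t(\mu X.A)=\mu X.t(A)$; it always has the form $\bullet^{m_0}\mu X_1.\bullet^{m_1}\mu X_2.\cdots\mu X_n.\bullet^{m_n}Y$. $A$ is a $\top$-variant iff $Y=X_i$ for some $1\le i\le n$ with $X_i\notin\{X_{i+1},\dots,X_n\}$ and $m_i+\dots+m_n\ge 1$. $A$ is proper in $X$ iff: a variable $Y$ is proper in $X$ iff $Y\neq X$; $\bullet A$ is always proper in $X$; $A\to B$ is proper in $X$ iff both $A,B$ are proper in $X$ or $B$ is a $\top$-variant; for $Y\ne X$, $\mu Y.A$ is proper in $X$ iff $A$ is proper in $X$ or $\mu Y.A$ is a $\top$-variant. Type expressions are the least set of pseudo type expressions containing all type variables, closed under $\to$ and $\bullet$, and containing $\mu X.A$ whenever it contains $A$ and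 $A$ is proper in $X$. Equality: $\cong$ is the least relation on type expressions such that: $A\cong A$; $A\cong B$ implies $B\cong A$; $A\cong B$ and $B\cong C$ imply $A\cong C$; $A\cong B$ implies $\bullet A\cong\bullet B$; $A\cong C$ and $B\cong D$ imply $A\to B\cong C\to D$; $A\to\top\cong\top$; $\mu X.A\cong A[\mu X.A/X]$; and if $A\cong C[A/X]$ with $C$ proper in $X$, then $A\cong\mu X.C$. $\simeq$ is the least relation satisfying the same closure conditions and additionally $\bullet(A\to B)\simeq\bullet A\to\bullet B$. Semantics: a syntactical $\lambda$-algebra $(\mathcal V,\cdot,[\![-]\!])$ consists of a nonempty set $\mathcal V$, a map $\cdot:\mathcal V\times\mathcal V\to\mathcal V$, and values $[\![M]\!]_\rho\in\mathcal V$ for untyped $\lambda$-terms $M$ and maps $\rho$ from individual variables to $\mathcal V$, such that $[\![x]\!]_\rho=\rho(x)$, $[\![MN]\!]_\rho=[\![M]\!]_\rho\cdot[\![N]\!]_\rho$, $[\![\lambda x.M]\!]_\rho\cdot v=[\![M]\!]_{\rho[v/x]}$, $[\![M]\!]_\rho$ depends only on $\rho$ restricted to free variables of $M$, and $M=_\beta N$ implies $[\![M]\!]_\rho=[\![N]\!]_\rho$; fix one. A well-founded frame is a pair $(\mathcal W,\rhd)$ with $\mathcal W$ nonempty and $\rhd$ a binary relation on $\mathcal W$ admitting no infinite chain $p_0\rhd p_1\rhd p_2\rhd\cdots$; $\trianglerighteq$ denotes the reflexive-transitive closure of $\rhd$. A type environment $\eta$ assigns a set $\eta(X)_p\subseteq\mathcal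 V$ to each type variable $X$ and world $p$; it is hereditary if $p\rhd q$ implies $\eta(X)_p\subseteq\eta(X)_q$. For hereditary $\eta$, $\mathcal I[A]^\eta_p\subseteq\mathcal V$ is defined (by well-founded induction on $p$ and the syntactic rank of $A$) by: $\mathcal I[A]^\eta_p=\mathcal V$ if $A$ is a $\top$-variant; otherwise $\mathcal I[X]^\eta_p=\eta(X)_p$; $\mathcal I[\bullet A]^\eta_p=\{u\mid u\in\mathcal I[A]^\eta_q\text{ for all }q\text{ with }p\rhd q\}$; $\mathcal I[A\to B]^\eta_p=\{u\mid \text{for all }q\text{ with }p\trianglerighteq q\text{ and all }v\in\mathcal I[A]^\eta_q,\ u\cdot v\in\mathcal I[B]^\eta_q\}$; $\mathcal I[\mu X.A]^\eta_p=\mathcal I[A[\mu X.A/X]]^\eta_p$. *)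

(* Type expressions with de Bruijn indices (alpha-conversion
   is then syntactic identity). *)
From Stdlib Require Import Arith List Relations.
Import ListNotations.

Inductive ty : Type :=
| TVar   : nat -> ty
| TArr   : ty -> ty -> ty
| TLater : ty -> ty
| TMu    : ty -> ty.

Fixpoint lift (c : nat) (A : ty) : ty :=
  match A with
  | TVar n => if c <=? n then TVar (S n) else TVar n
  | TArr A1 A2 => TArr (lift c A1) (lift c A2)
  | TLater A1 => TLater (lift c A1)
  | TMu A1 => TMu (lift (S c) A1)
  end.

Fixpoint liftn (k : nat) (B : ty) : ty :=
  match k with 0 => B | S k' => lift 0 (liftn k' B) end.

(* capture-avoiding substitution of B for variable k (other free
   variables above k are decremented: the binder of k disappears) *)
Fixpoint subst_at (k : nat) (B : ty) (A : ty) : ty :=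
  match A with
  | TVar n => if n =? k then liftn k B
              else if k <? n then TVar (pred n) else TVar n
  | TArr A1 A2 => TArr (subst_at k B A1) (subst_at k B A2)
  | TLater A1 => TLater (subst_at k B A1)
  | TMu A1 => TMu (subst_at (S k) B A1)
  end.

(* A[B/X] where A is the body of a binder mu X. A (X = index 0) *)
Definition subst0 (B A : ty) : ty := subst_at 0 B A.

Definition Top : ty := TMu (TLater (TVar 0)).

Fixpoint tail (A : ty) : ty :=
  match A with
  | TVar n => TVar n
  | TArr _ B => tail B
  | TLater A1 => TLater (tail A1)
  | TMu A1 => TMu (tail A1)
  end.

(* On a tail  •^m0 mu X1. •^m1 ... mu Xn. •^mn Y :  ctx records, for each
   enclosing mu of the tail (innermost first), whether some • occurred
   between that binder and the current position.  Y = X_i with X_i not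
   among X_{i+1..n} means Y is the de Bruijn index of the i-th binder
   (innermost binder with that name), and m_i+...+m_n >= 1 means a •
   occurs after that binder. *)
Fixpoint tv_check (T : ty) (ctx : list bool) : bool :=
  match T with
  | TVar k => nth k ctx false
  | TArr _ B => tv_check B ctx
  | TLater A1 => tv_check A1 (map (fun _ => true) ctx)
  | TMu A1 => tv_check A1 (false :: ctx)
  end.

Definition top_variant (A : ty) : bool := tv_check (tail A) [].

Fixpoint proper (A : ty) (x : nat) : Prop :=
  match A with
  | TVar y => y <> x
  | TLater _ => True
  | TArr A1 A2 => (proper A1 x /\ proper A2 x) \/ top_variant A2 = true
  | TMu A1 => proper A1 (S x) \/ top_variant (TMu A1) = true
  end.

Inductive is_type : ty -> Prop :=
| is_type_var : forall n, is_type (TVar n)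
| is_type_arr : forall A B, is_type A -> is_type B -> is_type (TArr A B)
| is_type_later : forall A, is_type A -> is_type (TLater A)
| is_type_mu : forall A, is_type A -> proper A 0 -> is_type (TMu A).

Inductive ty_cong : ty -> ty -> Prop :=
| cong_refl : forall A, is_type A -> ty_cong A A
| cong_sym : forall A B, ty_cong A B -> ty_cong B A
| cong_trans : forall A B C, ty_cong A B -> ty_cong B C -> ty_cong A C
| cong_later : forall A B, ty_cong A B -> ty_cong (TLater A) (TLater B)
| cong_arr : forall A B C D, ty_cong A C -> ty_cong B D ->
    ty_cong (TArr A B) (TArr C D)
| cong_arr_top : forall A, is_type A -> ty_cong (TArr A Top) Top
| cong_unfold : forall A, is_type (TMu A) -> ty_cong (TMu A) (subst0 (TMu A) A)
| cong_fix : forall A C, is_type C -> proper C 0 ->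
    ty_cong A (subst0 A C) -> ty_cong A (TMu C).

Inductive lterm : Type :=
| LVar : nat -> lterm
| LApp : lterm -> lterm -> lterm
| LLam : lterm -> lterm.

Fixpoint llift (c : nat) (M : lterm) : lterm :=
  match M with
  | LVar n => if c <=? n then LVar (S n) else LVar n
  | LApp M1 M2 => LApp (llift c M1) (llift c M2)
  | LLam M1 => LLam (llift (S c) M1)
  end.

Fixpoint lliftn (k : nat) (N : lterm) : lterm :=
  match k with 0 => N | S k' => llift 0 (lliftn k' N) end.

Fixpoint lsubst_at (k : nat) (N : lterm) (M : lterm) : lterm :=
  match M with
  | LVar n => if n =? k then lliftn k N
              else if k <? n then LVar (pred n) else LVar n
  | LApp M1 M2 => LApp (lsubst_at k N M1) (lsubst_at k N M2)
  | LLam M1 => LLam (lsubst_at (S k) N M1)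
  end.

Inductive beta1 : lterm -> lterm -> Prop :=
| beta_redex : forall M N, beta1 (LApp (LLam M) N) (lsubst_at 0 N M)
| beta_appl : forall M M' N, beta1 M M' -> beta1 (LApp M N) (LApp M' N)
| beta_appr : forall M N N', beta1 N N' -> beta1 (LApp M N) (LApp M N')
| beta_lam : forall M M', beta1 M M' -> beta1 (LLam M) (LLam M').

Definition beta_eq : lterm -> lterm -> Prop := clos_refl_sym_trans lterm beta1.

Fixpoint lfree (x : nat) (M : lterm) : Prop :=
  match M with
  | LVar n => n = x
  | LApp M1 M2 => lfree x M1 \/ lfree x M2
  | LLam M1 => lfree (S x) M1
  end.

Definition scons {V : Type} (v : V) (rho : nat -> V) : nat -> V :=
  fun n => match n with 0 => v | S n' => rho n' end.

Record syntactical_lambda_algebra (V : Type) (app : V -> V -> V)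
    (den : lterm -> (nat -> V) -> V) : Prop := {
  sla_nonempty : inhabited V;
  sla_var : forall x rho, den (LVar x) rho = rho x;
  sla_app : forall M N rho, den (LApp M N) rho = app (den M rho) (den N rho);
  sla_lam : forall M rho v, app (den (LLam M) rho) v = den M (scons v rho);
  sla_fv : forall M rho rho', (forall x, lfree x M -> rho x = rho' x) ->
             den M rho = den M rho';
  sla_beta : forall M N rho, beta_eq M N -> den M rho = den N rho
}.

Definition well_founded_frame (W : Type) (R : W -> W -> Prop) : Prop :=
  inhabited W /\ ~ (exists f : nat -> W, forall n, R (f n) (f (S n))).

Definition tenv (W V : Type) := nat -> W -> V -> Prop.

Definition hereditary {W V : Type} (R : W -> W -> Prop) (eta : tenv W V) : Prop :=
  forall X p q, R p q -> forall u, eta X p u -> eta X q u.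

(* F satisfies the defining equations of I[A]^eta_p (for hereditary eta,
   type expressions A and worlds p).  Sets are compared extensionally. *)
Definition interp_spec {W V : Type} (R : W -> W -> Prop) (app : V -> V -> V)
    (F : tenv W V -> W -> ty -> V -> Prop) : Prop :=
  forall (eta : tenv W V), hereditary R eta -> forall (p : W) (A : ty),
    is_type A ->
    (top_variant A = true -> forall u, F eta p A u) /\
    (top_variant A = false ->
       match A with
       | TVar X => forall u, F eta p A u <-> eta X p u
       | TLater A1 => forall u, F eta p A u <-> (forall q, R p q -> F eta q A1 u)
       | TArr A1 A2 => forall u, F eta p A u <->
           (forall q, clos_refl_trans W R p q ->
              forall v, F eta q A1 v -> F eta q A2 (app u v))
       | TMu A1 => forall u, F eta p A u <-> F eta p (subst0 (TMu A1) A1) u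
       end).

(* Interpret types by structural recursion, [μX.A] as a fixed point of its body.
   Properness of [A] in [X] makes the body contractive: its value at a world [p]
   depends on [X] only at worlds strictly after [p], so well-founded recursion
   along the frame yields a fixed point, and any two fixed points coincide.
   Top-variants come out as the full set, by well-founded induction through
   their [μ]s.  This interpretation satisfies the defining equations, and every
   other solution agrees with it (induction on worlds, then on the depth of
   unguarded constructors).  The rules of [≅] are then sound: unfolding is the
   fixed-point equation, [A → ⊤] and [⊤] are both top-variants, and the
   fixed-point rule is uniqueness of fixed points of contractive maps. *)

From Pilot Require Import Defs.
From Stdlib Require Import Relations Arith Lia List Wellfounded.
From Stdlib Require Import Classical ClassicalEpsilon FunctionalExtensionality PropExtensionality.
Import ListNotations.

Lemma tv_check_tail A ctx : tv_check (Defs.tail A) ctx = tv_check A ctx.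
Proof. revert ctx; induction A; intros; simpl; auto. Qed.

Lemma top_variantE A : top_variant A = tv_check A [].
Proof. apply tv_check_tail. Qed.

Lemma nth_true_lt (ctx : list bool) n : nth n ctx false = true -> n < length ctx.
Proof.
  intros H. destruct (Nat.lt_ge_cases n (length ctx)) as [|Hge]; auto.
  rewrite nth_overflow in H by exact Hge. discriminate.
Qed.

(* A variable above the context is never a guarded binder of the tail. *)
Lemma tv_check_lift A ctx c :
  tv_check (lift (c + length ctx) A) ctx = tv_check A ctx.
Proof.
  revert ctx c; induction A; intros ctx c; simpl.
  - destruct (Nat.leb_spec (c + length ctx) n); simpl; auto.
    rewrite !nth_overflow by lia. reflexivity.
  - apply IHA2.
  - rewrite <- (length_map (fun _ : bool => true) ctx). apply IHA.
  - replace (S (c + length ctx)) with (c + length (false :: ctx)) by (simpl; lia).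
    apply IHA.
Qed.

Lemma tv_check_subst_at A ctx k B : tv_check A ctx = true ->
  tv_check (subst_at (k + length ctx) B A) ctx = true.
Proof.
  revert ctx k; induction A; intros ctx k H; simpl in *.
  - pose proof (nth_true_lt _ _ H).
    destruct (Nat.eqb_spec n (k + length ctx)); [lia|].
    destruct (Nat.ltb_spec (k + length ctx) n); [lia|]. exact H.
  - apply IHA2, H.
  - rewrite <- (length_map (fun _ : bool => true) ctx). apply IHA, H.
  - replace (S (k + length ctx)) with (k + length (false :: ctx)) by (simpl; lia).
    apply IHA, H.
Qed.

Lemma top_variant_lift A c : top_variant (lift c A) = top_variant A.
Proof.
  rewrite !top_variantE. pose proof (tv_check_lift A [] c) as E.
  simpl in E. rewrite Nat.add_0_r in E. exact E.
Qed.

Lemma top_variant_subst_at A k B :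
  top_variant A = true -> top_variant (subst_at k B A) = true.
Proof.
  rewrite !top_variantE. intros H. pose proof (tv_check_subst_at A [] k B H) as E.
  simpl in E. rewrite Nat.add_0_r in E. exact E.
Qed.

Lemma proper_lift_self C c : proper (lift c C) c.
Proof.
  revert c; induction C; intros c; simpl; auto.
  destruct (Nat.leb_spec c n); simpl; lia.
Qed.

Lemma proper_lift C c x : proper C x -> proper (lift c C) (if c <=? x then S x else x).
Proof.
  revert c x; induction C; intros c x H; simpl in *.
  - destruct (Nat.leb_spec c n), (Nat.leb_spec c x); simpl; lia.
  - destruct H as [[H1 H2]|H]; [left; auto|right; rewrite top_variant_lift; auto].
  - exact I.
  - destruct H as [H|H].
    + left. specialize (IHC (S c) (S x) H).
      destruct (Nat.leb_spec c x), (Nat.leb_spec (S c) (S x)); simpl in *; auto; lia.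
    + right. change (top_variant (lift c (TMu C)) = true). rewrite top_variant_lift; auto.
Qed.

Lemma proper_liftn k B x : x < k -> proper (liftn k B) x.
Proof.
  revert x; induction k as [|k IHk]; intros x Hx; [lia|]. simpl.
  destruct x as [|x].
  - apply proper_lift_self.
  - apply (proper_lift _ 0 x), IHk. lia.
Qed.

Lemma proper_subst_at A k B x : x < k -> proper A x -> proper (subst_at k B A) x.
Proof.
  revert k x; induction A; intros k x Hx H; simpl in *.
  - destruct (Nat.eqb_spec n k); [apply proper_liftn; auto|].
    destruct (Nat.ltb_spec k n); simpl; lia.
  - destruct H as [[H1 H2]|H]; [left; auto|right; apply top_variant_subst_at; auto].
  - exact I.
  - destruct H as [H|H]; [left; apply IHA; auto; lia|].
    right. apply (top_variant_subst_at (TMu A) k B H).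
Qed.

Lemma is_type_lift A c : is_type A -> is_type (lift c A).
Proof.
  intros H; revert c; induction H; intros c; simpl.
  - destruct (c <=? n); constructor.
  - constructor; auto.
  - constructor; auto.
  - constructor; auto. apply (proper_lift _ (S c) 0); auto.
Qed.

Lemma is_type_liftn k B : is_type B -> is_type (liftn k B).
Proof. induction k; intros; simpl; auto using is_type_lift. Qed.

Lemma is_type_subst_at A k B : is_type A -> is_type B -> is_type (subst_at k B A).
Proof.
  intros H; revert k; induction H; intros k HB; simpl.
  - destruct (n =? k); [apply is_type_liftn; auto|].
    destruct (k <? n); constructor.
  - constructor; auto.
  - constructor; auto.
  - constructor; auto. apply proper_subst_at; auto; lia.
Qed.

Lemma is_type_Top : is_type Top.
Proof. repeat constructor. Qed.

Lemma ty_cong_is_type A B : ty_cong A B -> is_type A /\ is_type B.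
Proof.
  induction 1; try tauto.
  - split; constructor; tauto.
  - split; constructor; tauto.
  - split; [constructor; auto using is_type_Top|apply is_type_Top].
  - split; auto. inversion H; subst. apply is_type_subst_at; auto.
  - split; [tauto|constructor; auto].
Qed.

Fixpoint unguarded_depth (A : ty) : nat :=
  match A with
  | TVar _ | TLater _ => 0
  | TArr A1 A2 => if top_variant A2 then 0 else S (max (unguarded_depth A1) (unguarded_depth A2))
  | TMu A1 => if top_variant (TMu A1) then 0 else S (unguarded_depth A1)
  end.

Lemma unguarded_depth_subst_at A k B :
  proper A k -> unguarded_depth (subst_at k B A) <= unguarded_depth A.
Proof.
  revert k; induction A; intros k H; simpl in *.
  - destruct (Nat.eqb_spec n k); [lia|]. destruct (k <? n); simpl; lia.
  - destruct (top_variant (subst_at k B A2)) eqn:E1; [lia|].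
    destruct (top_variant A2) eqn:E2.
    + apply (top_variant_subst_at _ k B) in E2. congruence.
    + destruct H as [[H1 H2]|H]; [|congruence].
      specialize (IHA1 k H1). specialize (IHA2 k H2). lia.
  - lia.
  - destruct (top_variant (TMu (subst_at (S k) B A))) eqn:E1; [lia|].
    destruct (top_variant (TMu A)) eqn:E2.
    + apply (top_variant_subst_at _ k B) in E2. simpl in E2. congruence.
    + destruct H as [H|H]; [|congruence]. specialize (IHA (S k) H). lia.
Qed.

Section Frame.
Variables (W : Type) (R : W -> W -> Prop).

(* Dependent choice: a world that is not accessible starts an infinite chain. *)
Lemma well_founded_frame_wf_transp : well_founded_frame W R -> well_founded (transp W R).
Proof.
  intros [_ no_chain] p0. apply NNPP; intro bad0.
  set (Bad := fun x => ~ Acc (transp W R) x).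
  assert (bad_step : forall x, Bad x -> exists y, R x y /\ Bad y).
  { intros x Hx. apply NNPP; intro Hc. apply Hx. constructor. intros y Hy.
    apply NNPP; intro Hy'. apply Hc. exists y; auto. }
  assert (next : forall s : {x | Bad x}, {y | R (proj1_sig s) y /\ Bad y}).
  { intros [x Hx]. apply constructive_indefinite_description, bad_step, Hx. }
  set (g := fun s => exist Bad (proj1_sig (next s)) (proj2 (proj2_sig (next s)))).
  apply no_chain. exists (fun n => proj1_sig (Nat.iter n g (exist Bad p0 bad0))).
  intro n. exact (proj1 (proj2_sig (next _))).
Qed.

Lemma well_founded_frame_clos_trans :
  well_founded_frame W R -> well_founded (fun q p => clos_trans W R p q).
Proof.
  intros Hf. apply (wf_incl _ _ (clos_trans W (transp W R))).
  - intros q p H. apply clos_trans_transp_permute, H.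
  - apply wf_clos_trans, well_founded_frame_wf_transp, Hf.
Qed.

Lemma clos_rt_cases p q : clos_refl_trans W R p q -> p = q \/ clos_trans W R p q.
Proof.
  induction 1 as [x y H| |x y z _ [<-|H1] _ [<-|H2]]; auto using t_step.
  right; apply (t_trans _ _ _ y); auto.
Qed.

Lemma clos_t_rt_t p q r :
  clos_trans W R p q -> clos_refl_trans W R q r -> clos_trans W R p r.
Proof.
  intros H1 H2. destruct (clos_rt_cases _ _ H2) as [<-|H]; auto.
  apply (t_trans _ _ _ q); auto.
Qed.
End Frame.

Section Semantics.
Variables (W V : Type) (R : W -> W -> Prop) (app : V -> V -> V).

Notation crt := (clos_refl_trans W R).
Notation ct := (clos_trans W R).

Definition contractive (Phi : (W -> V -> Prop) -> W -> V -> Prop) : Prop :=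
  forall S1 S2 p, (forall q, ct p q -> S1 q = S2 q) -> Phi S1 p = Phi S2 p.

(* A chosen fixed point of [Phi], junk if [Phi] has none. *)
Definition later_fix (Phi : (W -> V -> Prop) -> W -> V -> Prop) : W -> V -> Prop :=
  epsilon (inhabits (fun (_ : W) (_ : V) => False)) (fun S => S = Phi S).

Fixpoint sem (A : ty) (eta : tenv W V) : W -> V -> Prop :=
  match A with
  | TVar n => eta n
  | TArr A1 A2 => fun p u =>
      forall q, crt p q -> forall v, sem A1 eta q v -> sem A2 eta q (app u v)
  | TLater A1 => fun p u => forall q, R p q -> sem A1 eta q u
  | TMu A1 => later_fix (fun S => sem A1 (scons S eta))
  end.

Definition env_del (c : nat) (eta : tenv W V) : tenv W V :=
  fun n => if n <? c then eta n else eta (S n).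

Definition env_drop (k : nat) (eta : tenv W V) : tenv W V := fun n => eta (n + k).

Definition env_ins (k : nat) (X : W -> V -> Prop) (eta : tenv W V) : tenv W V :=
  fun n => if n <? k then eta n else if n =? k then X else eta (pred n).

Lemma sem_lift A c eta : sem (lift c A) eta = sem A (env_del c eta).
Proof.
  revert c eta; induction A; intros c eta; simpl.
  - unfold env_del. destruct (Nat.leb_spec c n), (Nat.ltb_spec n c); auto; lia.
  - rewrite IHA1, IHA2; auto.
  - rewrite IHA; auto.
  - f_equal. apply functional_extensionality; intro X. rewrite IHA. f_equal.
    apply functional_extensionality; intros [|n]; reflexivity.
Qed.

Lemma sem_liftn k B eta : sem (liftn k B) eta = sem B (env_drop k eta).
Proof.
  revert B eta; induction k; intros B eta; simpl.
  - f_equal. apply functional_extensionality; intro n.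
    unfold env_drop; rewrite Nat.add_0_r; auto.
  - rewrite sem_lift, IHk. f_equal. apply functional_extensionality; intro n.
    unfold env_drop, env_del. simpl. f_equal; lia.
Qed.

Lemma sem_subst_at A k B eta :
  sem (subst_at k B A) eta = sem A (env_ins k (sem B (env_drop k eta)) eta).
Proof.
  revert k eta; induction A; intros k eta; simpl.
  - unfold env_ins.
    destruct (Nat.eqb_spec n k), (Nat.ltb_spec n k); subst; try lia.
    + rewrite sem_liftn. reflexivity.
    + destruct (Nat.ltb_spec k n), (Nat.eqb_spec n k); try lia; auto.
    + destruct (Nat.ltb_spec k n); try lia; auto.
  - rewrite IHA1, IHA2; auto.
  - rewrite IHA; auto.
  - f_equal. apply functional_extensionality; intro X. rewrite IHA. f_equal.
    apply functional_extensionality; intros [|n]; [reflexivity|].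
    unfold env_ins, env_drop. cbn [scons].
    replace (S n <? S k) with (n <? k) by reflexivity.
    replace (S n =? S k) with (n =? k) by reflexivity.
    destruct (Nat.ltb_spec n k); [reflexivity|].
    destruct (Nat.eqb_spec n k).
    + f_equal. apply functional_extensionality; intro m. now rewrite Nat.add_succ_r.
    + destruct n; [lia|reflexivity].
Qed.

Lemma sem_subst0 A B eta : sem (subst0 B A) eta = sem A (scons (sem B eta) eta).
Proof.
  unfold subst0. rewrite sem_subst_at. f_equal.
  apply functional_extensionality; intros [|n]; [|reflexivity].
  unfold env_ins, env_drop. simpl. f_equal.
  apply functional_extensionality; intro m. now rewrite Nat.add_0_r.
Qed.

Hypothesis ct_wf : well_founded (fun q p => ct p q).

Lemma contractive_fix_exists Phi : contractive Phi -> exists S, S = Phi S.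
Proof.
  intros Hc.
  set (G := fun (x : W) (h : forall y, ct x y -> V -> Prop) =>
              Phi (fun y u => exists H : ct x y, h y H u) x).
  exists (Fix ct_wf (fun _ => V -> Prop) G).
  apply functional_extensionality; intro x. rewrite Fix_eq.
  - apply Hc. intros q Hq. apply functional_extensionality; intro u.
    apply propositional_extensionality; split; [intros [_ H]; exact H|].
    intros H; exists Hq; exact H.
  - intros x0 f g Hfg. unfold G. f_equal.
    apply functional_extensionality; intro y; apply functional_extensionality; intro u.
    apply propositional_extensionality; split; intros [H1 H2]; exists H1;
      [rewrite <- Hfg | rewrite Hfg]; auto.
Qed.

Lemma later_fix_eq Phi : contractive Phi -> later_fix Phi = Phi (later_fix Phi).
Proof.
  intros Hc. apply (epsilon_spec _ (fun S => S = Phi S)), contractive_fix_exists, Hc.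
Qed.

Lemma contractive_fix_unique Phi X Y : contractive Phi -> X = Phi X -> Y = Phi Y -> X = Y.
Proof.
  intros Hc HX HY. apply functional_extensionality; intro p.
  induction p as [p IH] using (well_founded_ind ct_wf).
  rewrite HX, HY. apply Hc, IH.
Qed.

Definition env_agree (A : ty) (p : W) (eta1 eta2 : tenv W V) : Prop :=
  forall y, (forall q, crt p q -> eta1 y q = eta2 y q) \/
            (proper A y /\ forall q, ct p q -> eta1 y q = eta2 y q).

Definition sem_local (A : ty) : Prop :=
  forall p eta1 eta2, env_agree A p eta1 eta2 -> sem A eta1 p = sem A eta2 p.

Definition env_full (eta : tenv W V) (ctx : list bool) (p : W) : Prop :=
  forall k, k < length ctx ->
    (forall q, ct p q -> forall u, eta k q u) /\
    (nth k ctx false = true -> forall u, eta k p u).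

Definition sem_tv_full (A : ty) : Prop :=
  forall ctx eta p, tv_check A ctx = true -> env_full eta ctx p -> forall u, sem A eta p u.

Lemma env_agree_later A B p q eta1 eta2 :
  env_agree A p eta1 eta2 -> ct p q -> env_agree B q eta1 eta2.
Proof.
  intros H Hpq y. left. intros q' Hq'.
  destruct (H y) as [H1|[_ H1]]; apply H1.
  - apply clos_t_clos_rt, (clos_t_rt_t _ _ _ q); auto.
  - apply (clos_t_rt_t _ _ _ q); auto.
Qed.

Lemma env_agree_arr A B p eta1 eta2 : top_variant B = false ->
  env_agree (TArr A B) p eta1 eta2 -> env_agree A p eta1 eta2 /\ env_agree B p eta1 eta2.
Proof.
  intros Htv H. split; intros y; destruct (H y) as [H1|[[[HA HB]|HB] H1]];
    auto; congruence.
Qed.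

Lemma env_full_nil eta p : env_full eta [] p.
Proof. intros k Hk. simpl in Hk. lia. Qed.

Lemma env_full_reach eta ctx p q : env_full eta ctx p -> crt p q -> env_full eta ctx q.
Proof.
  intros H Hpq k Hk. destruct (H k Hk) as [H1 H2]. split.
  - intros q' Hq'. apply H1, (clos_rt_t _ _ _ q); auto.
  - intros Hn. destruct (clos_rt_cases _ _ _ _ Hpq) as [<-|Hc]; auto.
Qed.

Lemma env_full_later eta ctx p q :
  env_full eta ctx p -> R p q -> env_full eta (map (fun _ => true) ctx) q.
Proof.
  intros H Hpq k Hk. rewrite length_map in Hk. destruct (H k Hk) as [H1 _]. split.
  - intros q' Hq'. apply H1, (t_trans _ _ _ q); auto using t_step.
  - intros _. apply H1, t_step, Hpq.
Qed.

Lemma sem_ext_full (P Q : W -> V -> Prop) p :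
  (forall u, P p u) -> (forall u, Q p u) -> P p = Q p.
Proof.
  intros. apply functional_extensionality; intro u.
  apply propositional_extensionality; split; auto.
Qed.

Lemma sem_tv_full_top_variant A eta p :
  sem_tv_full A -> top_variant A = true -> forall u, sem A eta p u.
Proof.
  intros HA Htv. rewrite top_variantE in Htv. apply (HA []); auto using env_full_nil.
Qed.

Lemma sem_local_contractive A eta :
  sem_local A -> proper A 0 -> contractive (fun S => sem A (scons S eta)).
Proof.
  intros HA Hp X1 X2 p H. apply HA. intros [|y]; [right; auto|left; reflexivity].
Qed.

Lemma sem_mu_unfold A eta : sem_local A -> proper A 0 ->
  sem (TMu A) eta = sem A (scons (sem (TMu A) eta) eta).
Proof. intros HA Hp. apply later_fix_eq, sem_local_contractive; auto. Qed.

Lemma sem_local_var n : sem_local (TVar n).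
Proof.
  intros p eta1 eta2 H. destruct (H n) as [H1|[H1 _]]; [apply H1, rt_refl|].
  simpl in H1. congruence.
Qed.

Lemma sem_tv_full_var n : sem_tv_full (TVar n).
Proof.
  intros ctx eta p Ht Hfull u. simpl in Ht.
  exact (proj2 (Hfull n (nth_true_lt _ _ Ht)) Ht u).
Qed.

Lemma sem_tv_full_arr A B : sem_tv_full B -> sem_tv_full (TArr A B).
Proof.
  intros HB ctx eta p Ht Hfull u q Hq v _.
  apply (HB ctx); auto. apply (env_full_reach _ _ p); auto.
Qed.

Lemma sem_local_arr A B :
  sem_local A -> sem_local B -> sem_tv_full B -> sem_local (TArr A B).
Proof.
  intros HA HB HBfull p eta1 eta2 H.
  destruct (top_variant B) eqn:Htv.
  { apply sem_ext_full; intro u; apply sem_tv_full_top_variant;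
      auto using sem_tv_full_arr. }
  assert (E : forall q, crt p q ->
            sem A eta1 q = sem A eta2 q /\ sem B eta1 q = sem B eta2 q).
  { intros q Hq. destruct (clos_rt_cases _ _ _ _ Hq) as [<-|Hc].
    - destruct (env_agree_arr _ _ _ _ _ Htv H). split; auto.
    - split; [apply HA|apply HB]; apply (env_agree_later (TArr A B) _ p); auto. }
  simpl. apply functional_extensionality; intro u.
  apply propositional_extensionality; split; intros Hu q Hq v Hv;
    destruct (E q Hq) as [EA EB].
  - rewrite <- EB. apply Hu; auto. rewrite EA; auto.
  - rewrite EB. apply Hu; auto. rewrite <- EA; auto.
Qed.

Lemma sem_local_later A : sem_local A -> sem_local (TLater A).
Proof.
  intros HA p eta1 eta2 H.
  assert (E : forall q, R p q -> sem A eta1 q = sem A eta2 q).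
  { intros q Hq. apply HA, (env_agree_later (TLater A) _ p); auto using t_step. }
  simpl. apply functional_extensionality; intro u.
  apply propositional_extensionality; split; intros Hu q Hq;
    [rewrite <- E|rewrite E]; auto.
Qed.

Lemma sem_tv_full_later A : sem_tv_full A -> sem_tv_full (TLater A).
Proof.
  intros HA ctx eta p Ht Hfull u q Hq. simpl in Ht.
  apply (HA (map (fun _ => true) ctx)); auto. apply (env_full_later _ _ p); auto.
Qed.

(* The body is full at every world reachable from [p], by well-founded induction:
   the fresh variable is only needed to be full strictly later. *)
Lemma sem_tv_full_mu A :
  sem_local A -> proper A 0 -> sem_tv_full A -> sem_tv_full (TMu A).
Proof.
  intros HA Hp HAfull ctx eta p Ht Hfull.
  set (X := sem (TMu A) eta).
  assert (HX : X = sem A (scons X eta)) by (apply sem_mu_unfold; auto).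
  enough (Hreach : forall q, crt p q -> forall u, X q u) by (apply Hreach, rt_refl).
  intros q; induction q as [q IH] using (well_founded_ind ct_wf). intros Hpq u.
  rewrite HX. apply (HAfull (false :: ctx)); auto.
  intros [|k] Hk; simpl in Hk.
  - split; [|discriminate]. intros q' Hq'.
    apply IH; [exact Hq'|]. apply clos_t_clos_rt, (clos_rt_t _ _ _ q); auto.
  - apply (env_full_reach eta ctx p q Hfull Hpq k). lia.
Qed.

Lemma sem_local_mu A : sem_local A -> proper A 0 -> sem_tv_full (TMu A) -> sem_local (TMu A).
Proof.
  intros HA Hp Hfull p eta1 eta2 H.
  destruct (top_variant (TMu A)) eqn:Htv.
  { apply sem_ext_full; intro u; apply sem_tv_full_top_variant; auto. }
  set (X1 := sem (TMu A) eta1). set (X2 := sem (TMu A) eta2).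
  assert (HX1 : X1 = sem A (scons X1 eta1)) by (apply sem_mu_unfold; auto).
  assert (HX2 : X2 = sem A (scons X2 eta2)) by (apply sem_mu_unfold; auto).
  enough (Hreach : forall q, crt p q -> X1 q = X2 q) by (apply Hreach, rt_refl).
  intros q; induction q as [q IH] using (well_founded_ind ct_wf). intros Hpq.
  rewrite HX1, HX2. apply HA. intros [|y].
  - right. split; auto. intros q' Hq'.
    apply IH; auto. apply clos_t_clos_rt, (clos_rt_t _ _ _ q); auto.
  - cbn [scons]. destruct (H y) as [H1|[[H2|H2] H1]]; [| |congruence].
    + left. intros q' Hq'. apply H1, (rt_trans _ _ _ q); auto.
    + destruct (clos_rt_cases _ _ _ _ Hpq) as [<-|Hc]; [right; auto|].
      left. intros q' Hq'. apply H1, (clos_t_rt_t _ _ _ q); auto.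
Qed.

Lemma sem_is_type A : is_type A -> sem_local A /\ sem_tv_full A.
Proof.
  induction 1 as [n|A B _ [HA HAf] _ [HB HBf]|A _ [HA HAf]|A _ [HA HAf] Hp].
  - auto using sem_local_var, sem_tv_full_var.
  - auto using sem_local_arr, sem_tv_full_arr.
  - auto using sem_local_later, sem_tv_full_later.
  - assert (sem_tv_full (TMu A)) by (apply sem_tv_full_mu; auto).
    auto using sem_local_mu.
Qed.

Lemma sem_top_variant A eta p u : is_type A -> top_variant A = true -> sem A eta p u.
Proof. intros HA Htv. apply sem_tv_full_top_variant; auto. apply sem_is_type, HA. Qed.

Lemma sem_unfold A eta : is_type (TMu A) -> sem (TMu A) eta = sem (subst0 (TMu A) A) eta.
Proof.
  intros H. inversion H as [| | |? HA Hp]; subst.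
  rewrite sem_subst0. apply sem_mu_unfold; auto. apply sem_is_type, HA.
Qed.

Lemma sem_interp_spec : interp_spec R app (fun eta p A => sem A eta p).
Proof.
  intros eta _ p A HA. split.
  - intros Htv u. apply sem_top_variant; auto.
  - intros _. destruct A; intros u; try apply iff_refl.
    rewrite sem_unfold by exact HA. apply iff_refl.
Qed.

(* [A ≅ C[A/X]] makes [sem A] a second fixed point of the contractive body of [μX.C]. *)
Lemma sem_ty_cong A B eta : ty_cong A B -> sem A eta = sem B eta.
Proof.
  intros H; revert eta; induction H as [| | | | |A HA|A HA|A C HC Hp _ IH]; intros eta.
  - reflexivity.
  - symmetry; auto.
  - etransitivity; eauto.
  - simpl; rewrite IHty_cong; auto.
  - simpl; rewrite IHty_cong1, IHty_cong2; auto.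
  - apply functional_extensionality; intro p.
    apply sem_ext_full; intro u; apply sem_top_variant; auto using is_type_Top.
    constructor; auto using is_type_Top.
  - apply sem_unfold, HA.
  - destruct (sem_is_type C HC) as [HCloc _].
    apply (contractive_fix_unique (fun S => sem C (scons S eta)));
      auto using sem_local_contractive.
    + rewrite <- sem_subst0. apply IH.
    + apply sem_mu_unfold; auto.
Qed.

Section Uniqueness.
Variables (F : tenv W V -> W -> ty -> V -> Prop) (eta : tenv W V).
Hypotheses (HF : interp_spec R app F) (Heta : hereditary R eta).

(* At a fixed world the defining equations recurse on [unguarded_depth]. *)
Lemma interp_spec_sem_at p :
  (forall q, ct p q -> forall A, is_type A -> forall u, F eta q A u <-> sem A eta q u) ->
  forall A, is_type A -> forall u, F eta p A u <-> sem A eta p u.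
Proof.
  intros IHp.
  enough (Hn : forall n A, unguarded_depth A < n -> is_type A ->
                 forall u, F eta p A u <-> sem A eta p u)
    by (intros A; apply (Hn (S (unguarded_depth A))); lia).
  induction n as [|n IHn]; intros A Hlt HA u; [lia|].
  destruct (HF eta Heta p A HA) as [Htop Hnot].
  destruct (top_variant A) eqn:Htv.
  { split; intros _; [apply sem_top_variant|apply Htop]; auto. }
  specialize (Hnot eq_refl).
  destruct A as [x|A1 A2|A1|A1]; rewrite (Hnot u); simpl in Hlt;
    inversion HA as [|? ? HA1 HA2|? HA1|? HA1 Hp]; subst.
  - reflexivity.
  - change (top_variant A2 = false) in Htv. rewrite Htv in Hlt.
    assert (E : forall q, crt p q ->
              (forall v, F eta q A1 v <-> sem A1 eta q v) /\
              (forall v, F eta q A2 v <-> sem A2 eta q v)).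
    { intros q Hq. destruct (clos_rt_cases _ _ _ _ Hq) as [<-|Hc].
      - split; intros v; apply IHn; auto; lia.
      - split; intros v; apply IHp; auto. }
    split; intros Hu q Hq v Hv; destruct (E q Hq) as [E1 E2]; apply E2, Hu, E1; auto.
  - split; intros Hu q Hq; apply IHp; auto using t_step.
  - rewrite Htv in Hlt. rewrite sem_unfold by exact HA.
    apply IHn; [|apply is_type_subst_at; auto].
    pose proof (unguarded_depth_subst_at A1 0 (TMu A1) Hp). unfold subst0. lia.
Qed.

Lemma interp_spec_sem A p u : is_type A -> F eta p A u <-> sem A eta p u.
Proof.
  revert A u; induction p as [p IH] using (well_founded_ind ct_wf).
  intros A u HA. apply interp_spec_sem_at; auto.
Qed.
End Uniqueness.
End Semantics.

Theorem theorem4 :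
  forall (W : Type) (R : W -> W -> Prop) (V : Type) (app : V -> V -> V)
         (den : lterm -> (nat -> V) -> V),
    syntactical_lambda_algebra V app den ->
    well_founded_frame W R ->
    (exists F, interp_spec R app F) /\
    (forall F, interp_spec R app F ->
       forall A B, ty_cong A B ->
       forall (eta : tenv W V), hereditary R eta ->
       forall (p : W) (u : V), F eta p A u <-> F eta p B u).
Proof.
  intros W R V app den _ Hframe.
  pose proof (well_founded_frame_clos_trans W R Hframe) as ct_wf.
  split.
  - exists (fun eta p A => sem W V R app A eta p). apply sem_interp_spec, ct_wf.
  - intros F HF A B Hcong eta Heta p u.
    destruct (ty_cong_is_type A B Hcong) as [HA HB].
    rewrite (interp_spec_sem _ _ _ _ ct_wf F eta HF Heta A p u HA),
            (interp_spec_sem _ _ _ _ ct_wf F eta HF Heta B p u HB).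
    rewrite (sem_ty_cong _ _ _ _ ct_wf A B eta Hcong). reflexivity.
Qed.
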